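(* Let $(\mathcal{A},m,f)$ be a presheaf of commutative $k$-algebras on a small category $\mathcal{U}$, so that $\bar{\mathbf{C}}'_{\mathrm{GS}}(\mathcal{A})=\bar{\mathbf{C}}'_{\mathrm{tGS}}(\mathcal{A})\oplus\mathbf{C}'_{\mathrm{simp}}(\mathcal{A})$. Let $((m_1,f_1),c_1)\in Z^2\bar{\mathbf{C}}'_{\mathrm{GS}}(\mathcal{A})$, with corresponding first order twisted deformation $\bar{\mathcal{A}}=(\mathcal{A}[\epsilon],m+m_1\epsilon,f+f_1\epsilon,1+c_1\epsilon)$. Then $\bar{\mathcal{A}}$ is a twisted presheaf with central twists, and its underlying presheaf $\underline{\bar{\mathcal{A}}}=(\mathcal{A}[\epsilon],m+m_1\epsilon,f+f_1\epsilon)$ is the first order presheaf deformation corresponding to $(m_1,f_1)\in Z^2\bar{\mathbf{C}}'_{\mathrm{tGS}}(\mathcal{A})$.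
   Context: $k$ is a commutative ring, $k[\epsilon]=k[\epsilon]/(\epsilon^2)$. $\mathbf{C}_{\mathrm{GS}}(\mathcal{A})$ is the Gerstenhaber–Schack complex: total complex of $\mathbf{C}^{p,q}(\mathcal{A})=\prod_{\sigma\in\mathcal{N}_p(\mathcal{U})}\mathrm{Hom}_k(\mathcal{A}(c\sigma)^{\otimes q},\mathcal{A}(d\sigma))$ (product over $p$-simplices $\sigma=(d\sigma=U_0\to\cdots\to U_p=c\sigma)$ of the nerve) with componentwise Hochschild and simplicial differentials, $d_{\mathrm{GS}}=(-1)^{n+1}d_{\mathrm{simp}}+d_{\mathrm{Hoch}}$ in degree $n$. $\bar{\mathbf{C}}'$ denotes normalized (vanishing when an argument is $1$) and reduced (vanishing on degenerate simplices) cochains; $\mathbf{C}_{\mathrm{tGS}}$ is the part with $q\ge1$ and $\mathbf{C}_{\mathrm{simp}}$ the row $q=0$. A degree 2 cochain is written $(m_1,f_1,c_1)\in\mathbf{C}^{0,2}\oplus\mathbf{C}^{1,1}\oplus\mathbf{C}^{2,0}$. A twisted presheaf $(\mathcal{A},m,f,c)$ consists of algebras, algebra maps $u^*=f^u$ ($f^{1_U}=1$) and invertible $c^{u,v}\in\mathcal{A}(W)$ ($v\colon W\to V,u\colon V\to U$) with $c^{u,v}v^*u^*(a)=(uv)^*(a)c^{u,v}$, $c^{u,vw}c^{v,w}=c^{uv,w}w^*(c^{u,v})$, $c^{u,1}=c^{1,u}=1$; it has central twists if all $c^{u,v}$ are central, and then its underlying presheaf is $(\mathcal{A},m,f)$.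 A normalized reduced 2-cocycle $(m_1,f_1,c_1)$ determines the first order twisted deformation $(\mathcal{A}[\epsilon],m+m_1\epsilon,f+f_1\epsilon,1+c_1\epsilon)$ (a twisted presheaf of $k[\epsilon]$-algebras); when $c_1=0$ it is a presheaf deformation. *)

From HB Require Import structures.
From mathcomp Require Import all_boot all_algebra.
Set Implicit Arguments. Unset Strict Implicit. Unset Printing Implicit Defensive.
Import GRing.Theory.
Local Open Scope ring_scope.

(* A small category.  [Mor V U] is the type of arrows V -> U;
   [comp u v] (u : V -> U, v : W -> V) is the composite uv : W -> U. *)
Record smallcat := SmallCat {
  Ob : Type;
  Mor : Ob -> Ob -> Type;
  idm : forall U, Mor U U;
  comp : forall U V W, Mor V U -> Mor W V -> Mor W U;
  comp1m : forall U V (u : Mor V U), comp (idm U) u = u;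
  compm1 : forall U V (u : Mor V U), comp u (idm V) = u;
  compA : forall U V W X (u : Mor V U) (v : Mor W V) (w : Mor X W),
      comp u (comp v w) = comp (comp u v) w }.
Arguments idm {s} U.
Arguments comp {s U V W} u v.

Section Alg.
Variable k : comPzRingType.

Definition is_algebra (M : lmodType k) (mul : M -> M -> M) (one : M) : Prop :=
  ((associative mul) /\
     (left_id one mul) /\
     (right_id one mul) /\
     ((forall a x y z, mul (a *: x + y) z = a *: mul x z + mul y z)) /\
     ((forall a x y z, mul z (a *: x + y) = a *: mul z x + mul z y))).

Definition is_klinear (M N : lmodType k) (g : M -> N) : Prop :=
  forall a x y, g (a *: x + y) = a *: g x + g y.

Definition is_alg_map (M N : lmodType k) (mulM : M -> M -> M) (oneM : M)
    (mulN : N -> N -> N) (oneN : N) (g : M -> N) : Prop :=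
  ((is_klinear g) /\
     ((forall x y, g (mulM x y) = mulN (g x) (g y))) /\
     (g oneM = oneN)).

Definition is_invertible (M : lmodType k) (mul : M -> M -> M) (one : M) (c : M) :=
  exists d, mul c d = one /\ mul d c = one.
End Alg.

Section Presheaves.
Variables (C : smallcat) (k : comPzRingType) (B : Ob C -> lmodType k).

(* data (B, m, f) of a presheaf: f U V u = u^* : B U -> B V for u : V -> U *)
Record psh_data := PshData {
  pmul : forall U, B U -> B U -> B U;
  pone : forall U, B U;
  pmap : forall U V, Mor V U -> B U -> B V }.

(* data (B, m, f, c) of a twisted presheaf; ttw u v = c^{u,v} in B W *)
Record tw_data := TwData {
  tmul : forall U, B U -> B U -> B U;
  tone : forall U, B U;
  tmap : forall U V, Mor V U -> B U -> B V;
  ttw : forall U V W, Mor V U -> Mor W V -> B W }.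
Arguments pmul p U : clear implicits. Arguments pone p U : clear implicits. Arguments tmul t U : clear implicits. Arguments tone t U : clear implicits.

Definition is_presheaf (P : psh_data) : Prop :=
  (((forall U, is_algebra (pmul P U) (pone P U))) /\
     ((forall U V (u : Mor V U),
          is_alg_map (pmul P U) (pone P U) (pmul P V) (pone P V) (pmap P u))) /\
     ((forall U x, pmap P (idm U) x = x)) /\
     ((forall U V W (u : Mor V U) (v : Mor W V) x,
          pmap P (comp u v) x = pmap P v (pmap P u x)))).

Definition is_twisted_presheaf (T : tw_data) : Prop :=
  (((forall U, is_algebra (tmul T U) (tone T U))) /\
     ((forall U V (u : Mor V U),
          is_alg_map (tmul T U) (tone T U) (tmul T V) (tone T V) (tmap T u))) /\
     ((forall U x, tmap T (idm U) x = x)) /\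
     ((forall U V W (u : Mor V U) (v : Mor W V),
          is_invertible (tmul T W) (tone T W) (ttw T u v))) /\
     ((forall U V W (u : Mor V U) (v : Mor W V) a,
          tmul T W (ttw T u v) (tmap T v (tmap T u a))
          = tmul T W (tmap T (comp u v) a) (ttw T u v))) /\
     ((forall U V W X (u : Mor V U) (v : Mor W V) (w : Mor X W),
          tmul T X (ttw T u (comp v w)) (ttw T v w)
          = tmul T X (ttw T (comp u v) w) (tmap T w (ttw T u v)))) /\
     ((forall U V (u : Mor V U), ttw T u (idm V) = tone T V /\ ttw T (idm U) u = tone T V))).

Definition central_twists (T : tw_data) : Prop :=
  forall U V W (u : Mor V U) (v : Mor W V) x,
    tmul T W (ttw T u v) x = tmul T W x (ttw T u v).

(* underlying presheaf data of a twisted presheaf (meaningful with central twists) *)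
Definition underlying (T : tw_data) : psh_data :=
  PshData (tmul T) (tone T) (tmap T).
End Presheaves.
Arguments pmul {C k B} p U. Arguments pone {C k B} p U.
Arguments tmul {C k B} t U. Arguments tone {C k B} t U.

Section GS.
Local Unset Implicit Arguments.
Variables (C : smallcat) (k : comPzRingType) (A : Ob C -> lmodType k).
Variables (m : forall U, A U -> A U -> A U) (one : forall U, A U)
          (f : forall U V, Mor V U -> A U -> A V).
(* a degree 2 cochain (m1, f1, c1) in C^{0,2} + C^{1,1} + C^{2,0};
   c1 U V W u v is the component at the 2-simplex (W -v-> V -u-> U) *)
Variables (m1 : forall U, A U -> A U -> A U)
          (f1 : forall U V, Mor V U -> A U -> A V)
          (c1 : forall U V W, Mor V U -> Mor W V -> A W).

(* normalized (vanishing when an argument is 1) and reduced (vanishing on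
   degenerate simplices) k-multilinear cochains *)
Definition nr_cochain2 : Prop :=
  (((forall U a x y z, m1 U (a *: x + y) z = a *: m1 U x z + m1 U y z)) /\
     ((forall U a x y z, m1 U z (a *: x + y) = a *: m1 U z x + m1 U z y)) /\
     ((forall U V (u : Mor V U), is_klinear (f1 _ _ u))) /\
     ((forall U x, m1 U (one U) x = 0 /\ m1 U x (one U) = 0)) /\
     ((forall U V (u : Mor V U), f1 _ _ u (one U) = 0)) /\
     ((forall U x, f1 _ _ (idm U) x = 0)) /\
     ((forall U V (u : Mor V U), c1 _ _ _ u (idm V) = 0 /\ c1 _ _ _ (idm U) u = 0))).

(* components of d_GS (m1,f1,c1) = (-1)^{2+1} d_simp + d_Hoch *)
Definition dGS03 U (a b c : A U) : A U :=
  m U a (m1 U b c) - m1 U (m U a b) c + m1 U a (m U b c) - m U (m1 U a b) c.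

Definition dsimp_m1 U V (u : Mor V U) (a b : A U) : A V :=
  f _ _ u (m1 U a b) - m1 V (f _ _ u a) (f _ _ u b).
Definition dHoch_f1 U V (u : Mor V U) (a b : A U) : A V :=
  m V (f _ _ u a) (f1 _ _ u b) - f1 _ _ u (m U a b) + m V (f1 _ _ u a) (f _ _ u b).
Definition dGS12 U V (u : Mor V U) (a b : A U) : A V :=
  - dsimp_m1 U V u a b + dHoch_f1 U V u a b.

Definition dsimp_f1 U V W (u : Mor V U) (v : Mor W V) (a : A U) : A W :=
  f _ _ v (f1 _ _ u a) - f1 _ _ (comp u v) a + f1 _ _ v (f _ _ u a).
Definition dHoch_c1 U V W (u : Mor V U) (v : Mor W V) (a : A U) : A W :=
  m W (f _ _ (comp u v) a) (c1 _ _ _ u v) - m W (c1 _ _ _ u v) (f _ _ (comp u v) a).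
Definition dGS21 U V W (u : Mor V U) (v : Mor W V) (a : A U) : A W :=
  - dsimp_f1 U V W u v a + dHoch_c1 U V W u v a.

Definition dsimp_c1 U V W X (u : Mor V U) (v : Mor W V) (w : Mor X W) : A X :=
  f _ _ w (c1 _ _ _ u v) - c1 _ _ _ u (comp v w) + c1 _ _ _ (comp u v) w - c1 _ _ _ v w.
Definition dGS30 U V W X (u : Mor V U) (v : Mor W V) (w : Mor X W) : A X :=
  - dsimp_c1 U V W X u v w.

Definition Z2_GS : Prop :=
  ((nr_cochain2) /\
     ((forall U a b c, dGS03 U a b c = 0)) /\
     ((forall U V (u : Mor V U) a b, dGS12 U V u a b = 0)) /\
     ((forall U V W (u : Mor V U) (v : Mor W V) a, dGS21 U V W u v a = 0)) /\
     ((forall U V W X (u : Mor V U) (v : Mor W V) (w : Mor X W), dGS30 U V W X u v w = 0))).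

(* A[eps] = A + A eps, as pairs (a0, a1) = a0 + a1 eps *)
Definition Aeps (U : Ob C) : lmodType k := (A U * A U)%type.
Definition eps U (x : Aeps U) : Aeps U := (0, x.1).

Definition def_mul U (x y : Aeps U) : Aeps U :=
  (m U x.1 y.1, m U x.1 y.2 + m U x.2 y.1 + m1 U x.1 y.1).
Definition def_one U : Aeps U := (one U, 0).
Definition def_map U V (u : Mor V U) (x : Aeps U) : Aeps V :=
  (f _ _ u x.1, f _ _ u x.2 + f1 _ _ u x.1).
Definition def_tw U V W (u : Mor V U) (v : Mor W V) : Aeps W :=
  (one W, c1 _ _ _ u v).
End GS.

Section Deform.
Local Unset Implicit Arguments.
Variables (C : smallcat) (k : comPzRingType) (A : Ob C -> lmodType k).
Variables (m : forall U, A U -> A U -> A U) (one : forall U, A U)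
          (f : forall U V, Mor V U -> A U -> A V).
Variables (m1 : forall U, A U -> A U -> A U)
          (f1 : forall U V, Mor V U -> A U -> A V)
          (c1 : forall U V W, Mor V U -> Mor W V -> A W).

Definition twisted_deformation : tw_data (Aeps C k A) :=
  TwData (def_mul C k A m m1) (def_one C k A one) (def_map C k A f f1)
         (def_tw C k A one c1).

Definition presheaf_deformation : psh_data (Aeps C k A) :=
  PshData (def_mul C k A m m1) (def_one C k A one) (def_map C k A f f1).

(* (m1, f1) in Z^2 of the normalized reduced tGS complex (the q >= 1 part):
   the GS cocycle condition for the cochain (m1, f1, 0) *)
Definition Z2_tGS : Prop :=
  Z2_GS C k A m one f m1 f1 (fun U V W (_ : Mor V U) (_ : Mor W V) => 0 : A W).
End Deform.

Section Eps.
Variables (C : smallcat) (k : comPzRingType) (A : Ob C -> lmodType k).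
(* k[eps]-linearity of the structure: everything commutes with multiplication by eps *)
Definition eps_compatible_psh (P : psh_data (Aeps C k A)) : Prop :=
  (forall U (x y : Aeps C k A U),
      pmul P U (eps C k A U x) y = eps C k A U (pmul P U x y)
   /\ pmul P U x (eps C k A U y) = eps C k A U (pmul P U x y)) /\
  (forall U V (u : Mor V U) x, pmap P u (eps C k A U x) = eps C k A V (pmap P u x)).
Definition eps_compatible_tw (T : tw_data (Aeps C k A)) : Prop :=
  eps_compatible_psh (underlying T).
End Eps.

(* Because A is commutative, the Hochschild part [m (uv)^* a c - m c (uv)^* a] of the
   (2,1) component of [d_GS (m1, f1, c1)] vanishes.  Hence the twist [c1] drops out of the
   cocycle condition in bidegrees (0,3), (1,2), (2,1): [(m1, f1, 0)] is a cocycle on its own,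
   and [f1] satisfies the simplicial cocycle identity, which is exactly functoriality of
   [f + f1 eps].  The remaining components say that [m + m1 eps] is associative and unital,
   that [f + f1 eps] is multiplicative, and that [c1] is a simplicial 2-cocycle, i.e. that the
   twists [1 + c1 eps] satisfy the twisted cocycle identity.  These twists are central since A
   is commutative, so the twisted action condition reduces to functoriality. *)

From Pilot Require Import Defs.
From mathcomp Require Import all_boot ssralg.
Set Implicit Arguments. Unset Strict Implicit. Unset Printing Implicit Defensive.
Import GRing.Theory.
Local Open Scope ring_scope.

(* Proves an identity in an abelian group: move everything to the left-hand side and
   cancel each summand against its opposite. *)
Ltac cancel_step := match goal with
  | |- ?p + ?s - ?s = 0 => rewrite addrK
  | |- ?p - ?s + ?s = 0 => rewrite addrNK
  | |- ?p - ?s = 0 => rewrite [in p](addrAC _ s)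
  | |- ?p + ?t = 0 => rewrite [in p](addrAC _ (- t))
  end.
Ltac abelian := apply/eqP; rewrite -subr_eq0; apply/eqP;
  rewrite -[LHS]add0r ?subr0 ?scalerDr ?opprD ?opprK ?addrA; do 200 (try cancel_step); done.
(* Same, when the difference of the two sides is the left-hand side of [H : _ = 0]. *)
Ltac abelian_with H := first
  [ apply/eqP; rewrite -subr_eq0; apply/eqP; rewrite -[RHS]H; abelian
  | apply/eqP; rewrite eq_sym -subr_eq0; apply/eqP; rewrite -[RHS]H; abelian ].

Section KLinear.
Variables (k : comPzRingType) (M N : lmodType k) (g : M -> N).
Hypothesis g_lin : is_klinear g.

Lemma klinearD x y : g (x + y) = g x + g y.
Proof. by have := g_lin 1 x y; rewrite !scale1r. Qed.

Lemma klinear0 : g 0 = 0.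
Proof. by apply: (addrI (g 0)); rewrite -klinearD !addr0. Qed.

Lemma klinearZ a x : g (a *: x) = a *: g x.
Proof. by rewrite -[a *: x]addr0 g_lin klinear0 addr0. Qed.
End KLinear.

Lemma scale_pairE (k : comPzRingType) (M N : lmodType k) a (x : M) (y : N) :
  a *: (x, y) = (a *: x, a *: y).
Proof. by []. Qed.

Section AlgebraFacts.
Variables (k : comPzRingType) (M : lmodType k) (mul : M -> M -> M) (one : M).
Hypothesis mul_alg : is_algebra mul one.

Lemma algebra_mulA : associative mul. Proof. by case: mul_alg. Qed.
Lemma algebra_mul1r : left_id one mul. Proof. by case: mul_alg => _ []. Qed.
Lemma algebra_mulr1 : right_id one mul. Proof. by case: mul_alg => _ [_ []]. Qed.
Lemma algebra_klinearl z : is_klinear (mul^~ z).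
Proof. by case: mul_alg => _ [_ [_ [linl _]]] a x y; apply: linl. Qed.
Lemma algebra_klinearr z : is_klinear (mul z).
Proof. by case: mul_alg => _ [_ [_ [_ linr]]] a x y; apply: linr. Qed.

Lemma algebra_mulrDl x y z : mul (x + y) z = mul x z + mul y z.
Proof. exact: klinearD (algebra_klinearl z) x y. Qed.
Lemma algebra_mulrDr x y z : mul z (x + y) = mul z x + mul z y.
Proof. exact: klinearD (algebra_klinearr z) x y. Qed.
Lemma algebra_mul0r z : mul 0 z = 0.
Proof. exact: klinear0 (algebra_klinearl z). Qed.
Lemma algebra_mulr0 z : mul z 0 = 0.
Proof. exact: klinear0 (algebra_klinearr z). Qed.
End AlgebraFacts.

(* [dual_mul mul mul1] is [mul + mul1 eps] on [M[eps] = M * M], where the pair [(x, y)]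
   stands for [x + y eps]. *)
Section DualNumbers.
Variables (k : comPzRingType) (M : lmodType k) (mul mul1 : M -> M -> M) (one : M).

Definition dual_mul (x y : M * M) : M * M :=
  (mul x.1 y.1, mul x.1 y.2 + mul x.2 y.1 + mul1 x.1 y.1).

Hypothesis mul_alg : is_algebra mul one.
Hypothesis mul1_linl : forall z, is_klinear (mul1^~ z).
Hypothesis mul1_linr : forall z, is_klinear (mul1 z).
Hypothesis mul1_1x : forall x, mul1 one x = 0.
Hypothesis mul1_x1 : forall x, mul1 x one = 0.

Lemma dual_mul_algebra :
  (forall a b c,
     mul a (mul1 b c) - mul1 (mul a b) c + mul1 a (mul b c) - mul (mul1 a b) c = 0) ->
  is_algebra dual_mul (one, 0).
Proof.
move=> hochschild.
have mulDl := algebra_mulrDl mul_alg; have mulDr := algebra_mulrDr mul_alg.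
have mulZl := klinearZ (algebra_klinearl mul_alg _).
have mulZr := klinearZ (algebra_klinearr mul_alg _).
have mul1Dl := klinearD (mul1_linl _); have mul1Zl := klinearZ (mul1_linl _).
have mul1Dr := klinearD (mul1_linr _); have mul1Zr := klinearZ (mul1_linr _).
split; [|split; [|split; [|split]]].
- move=> [x1 x2] [y1 y2] [z1 z2]; rewrite /dual_mul /=.
  congr pair; first exact: (algebra_mulA mul_alg).
  rewrite !(mulDl, mulDr, algebra_mulA mul_alg); abelian_with (hochschild x1 y1 z1).
- move=> [x1 x2]; rewrite /dual_mul /=; congr pair; first exact: (algebra_mul1r mul_alg).
  by rewrite (algebra_mul0r mul_alg) mul1_1x (algebra_mul1r mul_alg) !addr0.
- move=> [x1 x2]; rewrite /dual_mul /=; congr pair; first exact: (algebra_mulr1 mul_alg).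
  by rewrite (algebra_mulr0 mul_alg) mul1_x1 (algebra_mulr1 mul_alg) add0r addr0.
- move=> a [x1 x2] [y1 y2] [z1 z2]; rewrite /dual_mul !scale_pairE /=.
  congr pair; first exact: (algebra_klinearl mul_alg).
  rewrite !(mulDl, mulZl, mul1Dl, mul1Zl); abelian.
- move=> a [x1 x2] [y1 y2] [z1 z2]; rewrite /dual_mul !scale_pairE /=.
  congr pair; first exact: (algebra_klinearr mul_alg).
  rewrite !(mulDr, mulZr, mul1Dr, mul1Zr); abelian.
Qed.

Lemma dual_mul_one_plus_eps a b : dual_mul (one, a) (one, b) = (one, a + b).
Proof.
by rewrite /dual_mul /= !(algebra_mul1r mul_alg) (algebra_mulr1 mul_alg) mul1_1x addr0 addrC.
Qed.

Lemma dual_one_plus_eps_invertible c : is_invertible dual_mul (one, 0) (one, c).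
Proof. by exists (one, - c); rewrite !dual_mul_one_plus_eps addrN addNr. Qed.

Lemma dual_one_plus_eps_central c x :
  (forall y, mul c y = mul y c) -> dual_mul (one, c) x = dual_mul x (one, c).
Proof.
move=> cC; rewrite /dual_mul /= !(algebra_mul1r mul_alg) !(algebra_mulr1 mul_alg).
by rewrite mul1_1x mul1_x1 cC (addrC x.2).
Qed.

Lemma dual_mul_epsl x y : dual_mul (0, x.1) y = (0, (dual_mul x y).1).
Proof.
by rewrite /dual_mul /= !(algebra_mul0r mul_alg) (klinear0 (mul1_linl _)) add0r addr0.
Qed.

Lemma dual_mul_epsr x y : dual_mul x (0, y.1) = (0, (dual_mul x y).1).
Proof.
by rewrite /dual_mul /= !(algebra_mulr0 mul_alg) (klinear0 (mul1_linr _)) !addr0.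
Qed.
End DualNumbers.

Section DualMaps.
Variables (k : comPzRingType) (M N : lmodType k).
Variables (mulM mulM1 : M -> M -> M) (oneM : M) (mulN mulN1 : N -> N -> N) (oneN : N).
Variables (g g1 : M -> N).

Definition dual_map (x : M * M) : N * N := (g x.1, g x.2 + g1 x.1).

Hypothesis mulN_alg : is_algebra mulN oneN.
Hypothesis g_alg : is_alg_map mulM oneM mulN oneN g.
Hypothesis g1_lin : is_klinear g1.
Hypothesis g1_one : g1 oneM = 0.

Let g_lin : is_klinear g. Proof. by case: g_alg. Qed.
Let gM x y : g (mulM x y) = mulN (g x) (g y). Proof. by case: g_alg => _ []. Qed.
Let g_one : g oneM = oneN. Proof. by case: g_alg => _ []. Qed.

Lemma dual_map_alg_map :
  (forall a b, - (g (mulM1 a b) - mulN1 (g a) (g b))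
               + (mulN (g a) (g1 b) - g1 (mulM a b) + mulN (g1 a) (g b)) = 0) ->
  is_alg_map (dual_mul mulM mulM1) (oneM, 0) (dual_mul mulN mulN1) (oneN, 0) dual_map.
Proof.
move=> derivation; split; [|split].
- move=> a [x1 x2] [y1 y2]; rewrite /dual_map !scale_pairE /=.
  congr pair; first exact: g_lin.
  rewrite !(g_lin, g1_lin, klinearD g_lin, klinearD g1_lin, klinearZ g_lin, klinearZ g1_lin).
  abelian.
- move=> [x1 x2] [y1 y2]; rewrite /dual_map /dual_mul /=.
  congr pair; first exact: gM.
  rewrite !(klinearD g_lin, gM, algebra_mulrDl mulN_alg, algebra_mulrDr mulN_alg).
  abelian_with (derivation x1 y1).
- by rewrite /dual_map /= g_one g1_one (klinear0 g_lin) addr0.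
Qed.

Lemma dual_map_one_plus_eps a : dual_map (oneM, a) = (oneN, g a).
Proof. by rewrite /dual_map /= g_one g1_one addr0. Qed.

Lemma dual_map_eps x : dual_map (0, x.1) = (0, (dual_map x).1).
Proof. by rewrite /dual_map /= (klinear0 g_lin) (klinear0 g1_lin) addr0. Qed.

End DualMaps.

Lemma dual_map_comp (k : comPzRingType) (M N P : lmodType k)
    (g g1 : M -> N) (h h1 : N -> P) (gh gh1 : M -> P) x :
    is_klinear h -> (forall a, gh a = h (g a)) ->
    (forall a, gh1 a = h (g1 a) + h1 (g a)) ->
  dual_map gh gh1 x = dual_map h h1 (dual_map g g1 x).
Proof. by move=> h_lin ghE gh1E; rewrite /dual_map /= !ghE gh1E (klinearD h_lin) addrA. Qed.

Section FirstOrderDeformation.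
Local Unset Implicit Arguments.
Context {C : smallcat} {k : comPzRingType} {A : Ob C -> lmodType k}.
Context {m : forall U, A U -> A U -> A U} {one : forall U, A U}
  {f : forall U V, Mor V U -> A U -> A V}.
Context {m1 : forall U, A U -> A U -> A U} {f1 : forall U V, Mor V U -> A U -> A V}
  {c1 : forall U V W, Mor V U -> Mor W V -> A W}.
Hypothesis Hpsh : is_presheaf (PshData m one f).
Hypothesis Hcomm : forall U, commutative (m U).
Hypothesis Hcoc : Z2_GS C k A m one f m1 f1 c1.

Let m_alg U : is_algebra (m U) (one U).
Proof. by case: Hpsh. Qed.
Let f_alg U V (u : Mor V U) : is_alg_map (m U) (one U) (m V) (one V) (f _ _ u).
Proof. by case: Hpsh => _ []. Qed.
Let f_id U x : f _ _ (idm U) x = x.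
Proof. by case: Hpsh => _ [_ []]. Qed.
Let f_comp U V W (u : Mor V U) (v : Mor W V) x :
  f _ _ (Defs.comp u v) x = f _ _ v (f _ _ u x).
Proof. by case: Hpsh => _ [_ [_ ]]. Qed.

Let m1_linl U z : is_klinear (m1 U ^~ z).
Proof. by case: Hcoc => -[m1L _] _ a x y; apply: m1L. Qed.
Let m1_linr U z : is_klinear (m1 U z).
Proof. by case: Hcoc => -[_ [m1R _]] _ a x y; apply: m1R. Qed.
Let f1_lin U V (u : Mor V U) : is_klinear (f1 _ _ u).
Proof. by case: Hcoc => -[_ [_ [f1L _]]] _; apply: f1L. Qed.
Let m1_1x U x : m1 U (one U) x = 0.
Proof. by case: Hcoc => -[_ [_ [_ [/(_ U x) [-> _] _]]]]. Qed.
Let m1_x1 U x : m1 U x (one U) = 0.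
Proof. by case: Hcoc => -[_ [_ [_ [/(_ U x) [_ ->] _]]]]. Qed.
Let f1_one U V (u : Mor V U) : f1 _ _ u (one U) = 0.
Proof. by case: Hcoc => -[_ [_ [_ [_ [-> _]]]]]. Qed.
Let f1_id U x : f1 _ _ (idm U) x = 0.
Proof. by case: Hcoc => -[_ [_ [_ [_ [_ [-> _]]]]]]. Qed.

Let def_mulE U : def_mul C k A m m1 U = dual_mul (m U) (m1 U).
Proof. by []. Qed.
Let def_mapE U V (u : Mor V U) : def_map C k A f f1 U V u = dual_map (f _ _ u) (f1 _ _ u).
Proof. by []. Qed.

Lemma deformation_mul_algebra U : is_algebra (def_mul C k A m m1 U) (def_one C k A one U).
Proof.
by apply: dual_mul_algebra => //; case: Hcoc => _ [hochschild _]; apply: hochschild.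
Qed.

Lemma deformation_map_alg_map U V (u : Mor V U) :
  is_alg_map (def_mul C k A m m1 U) (def_one C k A one U)
             (def_mul C k A m m1 V) (def_one C k A one V) (def_map C k A f f1 U V u).
Proof.
by apply: dual_map_alg_map => //; case: Hcoc => _ [_ [derivation _]]; apply: derivation.
Qed.

Lemma f1_comp U V W (u : Mor V U) (v : Mor W V) a :
  f1 _ _ (Defs.comp u v) a = f _ _ v (f1 _ _ u a) + f1 _ _ v (f _ _ u a).
Proof.
have : dGS21 C k A m f f1 c1 U V W u v a = 0 by case: Hcoc => _ [_ [_ [H21 _]]].
rewrite /dGS21 /dHoch_c1 Hcomm subrr addr0 => /eqP.
by rewrite oppr_eq0 /dsimp_f1 => /eqP f1_cocycle; abelian_with f1_cocycle.
Qed.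

Lemma deformation_map_comp U V W (u : Mor V U) (v : Mor W V) x :
  def_map C k A f f1 U W (Defs.comp u v) x
  = def_map C k A f f1 V W v (def_map C k A f f1 U V u x).
Proof.
apply: (dual_map_comp (g := f _ _ u) (g1 := f1 _ _ u)); last exact: f1_comp.
  by case: (f_alg V W v).
exact: f_comp.
Qed.

Lemma deformation_presheaf : is_presheaf (presheaf_deformation C k A m one f m1 f1).
Proof.
split; [exact: deformation_mul_algebra | split; [exact: deformation_map_alg_map | split]].
- by move=> U [x1 x2]; rewrite /= /def_map /= !f_id f1_id addr0.
- exact: deformation_map_comp.
Qed.

Lemma deformation_central_twists :
  central_twists (twisted_deformation C k A m one f m1 f1 c1).
Proof. by move=> U V W u v x; apply: dual_one_plus_eps_central => // y; apply: Hcomm. Qed.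

Lemma deformation_twisted_presheaf :
  is_twisted_presheaf (twisted_deformation C k A m one f m1 f1 c1).
Proof.
have [mul_alg [map_alg [map_id _]]] := deformation_presheaf.
split; [exact: mul_alg | split; [exact: map_alg | split; [exact: map_id | split]]].
  by move=> U V W u v; apply: dual_one_plus_eps_invertible.
split.
  move=> U V W u v a; rewrite /= -deformation_map_comp.
  exact: deformation_central_twists.
split.
  move=> U V W X u v w; rewrite /= /def_tw def_mapE def_mulE.
  rewrite (dual_map_one_plus_eps (f_alg _ _ w) (f1_one _ _ w)).
  rewrite !(dual_mul_one_plus_eps (m_alg X) (m1_1x X)).
  have : dGS30 C k A f c1 U V W X u v w = 0 by case: Hcoc => _ [_ [_ [_ H30]]].
  rewrite /dGS30 => /eqP; rewrite oppr_eq0 /dsimp_c1 => /eqP c1_cocycle.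
  by congr pair; abelian_with c1_cocycle.
move=> U V u; rewrite /= /def_tw.
by case: Hcoc => -[_ [_ [_ [_ [_ [_ /(_ U V u) [-> ->]]]]]]] _.
Qed.

Lemma deformation_eps_compatible :
  eps_compatible_psh (presheaf_deformation C k A m one f m1 f1).
Proof.
split=> [U x y | U V u x]; last exact: (dual_map_eps (f_alg _ _ u)).
by split; [apply: dual_mul_epsl | apply: dual_mul_epsr].
Qed.

Lemma deformation_Z2_tGS : Z2_tGS C k A m one f m1 f1.
Proof.
have [normalized [hochschild [derivation _]]] := Hcoc.
split; first by case: normalized => ? [? [? [? [? [? _]]]]]; do !split.
split; first exact: hochschild.
split; first exact: derivation.
split.
  move=> U V W u v a; rewrite /dGS21 /dHoch_c1 /dsimp_f1 f1_comp.
  by rewrite (algebra_mulr0 (m_alg W)) (algebra_mul0r (m_alg W)) subrr addr0; abelian.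
move=> U V W X u v w.
by rewrite /dGS30 /dsimp_c1 (klinear0 (f_alg W X w).1) !subr0 addr0 oppr0.
Qed.

End FirstOrderDeformation.

Theorem proposition2p24 (C : smallcat) (k : comPzRingType) (A : Ob C -> lmodType k)
  (m : forall U, A U -> A U -> A U) (one : forall U, A U)
  (f : forall U V, Mor V U -> A U -> A V)
  (Hpsh : is_presheaf (PshData m one f))
  (Hcomm : forall U, commutative (m U))
  (m1 : forall U, A U -> A U -> A U)
  (f1 : forall U V, Mor V U -> A U -> A V)
  (c1 : forall U V W, Mor V U -> Mor W V -> A W)
  (Hcoc : Z2_GS C k A m one f m1 f1 c1) :
  let Abar := twisted_deformation C k A m one f m1 f1 c1 in
  ((is_twisted_presheaf Abar) /\
     (eps_compatible_tw Abar) /\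
     (central_twists Abar) /\
     (Z2_tGS C k A m one f m1 f1) /\
     (underlying Abar = presheaf_deformation C k A m one f m1 f1) /\
     (is_presheaf (presheaf_deformation C k A m one f m1 f1)) /\
     (eps_compatible_psh (presheaf_deformation C k A m one f m1 f1))).
Proof.
move=> Abar; have eps_compatible := deformation_eps_compatible Hpsh Hcoc.
split; first exact: deformation_twisted_presheaf Hpsh Hcomm Hcoc.
split; first exact: eps_compatible.
split; first exact: deformation_central_twists Hpsh Hcomm Hcoc.
split; first exact: deformation_Z2_tGS Hpsh Hcomm Hcoc.
split; first by [].
split; first exact: deformation_presheaf Hpsh Hcomm Hcoc.
exact: eps_compatible.
Qed.
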